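(* $\mathcal T^+=G\gamma^+$ and $\mathcal T^-=G\gamma^-$, where $\gamma^+=\{(i\sin u,0,\cos u):0<u<\pi\}$ and $\gamma^-=\{(i\sin u,0,\cos u):-\pi<u<0\}$, i.e. $\mathcal T^\pm$ is the union of the orbits under $G$ of the points of $\gamma^\pm$.
   Context: $[z\cdot z']=z_0z'_0-z_1z'_1-z_2z'_2$ on $\mathbb C^3$, $z^2=[z\cdot z]$; $X^{(c)}=\{z\in\mathbb C^3:z^2=-1\}$, $z=x+iy$; $V^+=\{y\in\mathbb R^3:y^2>0,y_0>0\}$, $V^-=-V^+$; $\mathcal T^\pm=\{z=x+iy\in X^{(c)}:y\in V^\pm\}$; $G=SO_0(1,2)$ (connected component of the group of real linear maps preserving $[\cdot]$), acting on $X^{(c)}$ by $gz=gx+igy$. *)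

From HB Require Import structures.
From mathcomp Require Import all_boot all_order all_algebra.
From mathcomp Require Import all_classical all_reals all_analysis.
From mathcomp Require Import complex.
Set Implicit Arguments. Unset Strict Implicit. Unset Printing Implicit Defensive.
Import Order.TTheory GRing.Theory Num.Theory.
Import numFieldTopology.Exports numFieldNormedType.Exports.
Local Open Scope ring_scope.
Local Open Scope classical_set_scope.
Local Open Scope complex_scope.

Section Defs.
Variable R : realType.

Definition lform (K : comNzRingType) (z w : 'cV[K]_3) : K :=
  z 0 0 * w 0 0 - z 1 0 * w 1 0 - z 2 0 * w 2 0.

Definition reV (z : 'cV[R[i]]_3) : 'cV[R]_3 := map_mx (@complex.Re R) z.
Definition imV (z : 'cV[R[i]]_3) : 'cV[R]_3 := map_mx (@complex.Im R) z.

Definition Xc : set 'cV[R[i]]_3 := [set z | lform z z = -1].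

Definition Vplus : set 'cV[R]_3 := [set y | 0 < lform y y /\ 0 < y 0 0].
Definition Vminus : set 'cV[R]_3 := [set y | Vplus (- y)].

Definition Tplus : set 'cV[R[i]]_3 := [set z | Xc z /\ Vplus (imV z)].
Definition Tminus : set 'cV[R[i]]_3 := [set z | Xc z /\ Vminus (imV z)].

Definition O12 : set 'M[R]_3 :=
  [set g | forall x y : 'cV[R]_3, lform (g *m x) (g *m y) = lform x y].

(* G = SO_0(1,2): the connected component of the identity in O12
   (matrices carry their standard topology from mathcomp-analysis) *)
Definition G : set 'M[R]_3 := connected_component O12 1%:M.

Definition act (g : 'M[R]_3) (z : 'cV[R[i]]_3) : 'cV[R[i]]_3 :=
  map_mx (fun r : R => r%:C) g *m z.

Definition gpt (u : R) : 'cV[R[i]]_3 :=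
  \col_(k < 3) (if k == 0 then (0 +i* sin u)
                else if k == 1 then 0 else (cos u)%:C).

Definition gamma_plus : set 'cV[R[i]]_3 :=
  [set z | exists u, 0 < u < pi /\ z = gpt u].
Definition gamma_minus : set 'cV[R[i]]_3 :=
  [set z | exists u, - pi < u < 0 /\ z = gpt u].

Definition Gorbits (S : set 'cV[R[i]]_3) : set 'cV[R[i]]_3 :=
  [set w | exists g z, G g /\ S z /\ w = act g z].

End Defs.

From HB Require Import structures.
From mathcomp Require Import all_boot all_order all_algebra.
From mathcomp Require Import all_classical all_reals all_analysis.
From mathcomp Require Import complex.
From mathcomp Require Import ring lra.
Set Implicit Arguments. Unset Strict Implicit. Unset Printing Implicit Defensive.
Import Order.TTheory GRing.Theory Num.Theory.
Import numFieldTopology.Exports numFieldNormedType.Exports.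
Local Open Scope ring_scope.
Local Open Scope classical_set_scope.
Local Open Scope complex_scope.

(* Complex conjugation commutes with the (real) action of [G], maps [gpt u] to
   [gpt (- u)] and swaps the two tubes, so only [T^+ = G gamma^+] needs proof.
   If [z = x + i y] lies in [T^+], then [x.x - y.y = -1] and [x.y = 0].  A
   rotation followed by a boost maps [(S, 0, 0)] to [y], where [S^2 = y.y];
   pulling [x] back gives a vector orthogonal to [e0] of Lorentz norm [S^2 - 1],
   which a rotation about [e0] moves to [(0, 0, sqrt (1 - S^2))].  With
   [S = sin u] this exhibits [z] in the orbit of [gpt u].  Rotations and boosts
   lie in [G] because they lie on continuous paths in [O(1,2)] through [1].
   Conversely [Im (g (gpt u)) = sin u * g e0] lies in [V^+] because [g] preserves
   the form and [g 0 0 > 0] on the connected component [G]. *)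

Lemma ord3P (i : 'I_3) : [\/ i = 0, i = 1 | i = 2].
Proof. by case: i => -[|[|[|//]]] ? /=; [constructor 1|constructor 2|constructor 3]; apply: val_inj. Qed.

Lemma sum3 (V : nmodType) (F : 'I_3 -> V) : \sum_(j < 3) F j = F 0 + F 1 + F 2.
Proof.
rewrite !big_ord_recr big_ord0 /= add0r.
by congr (F _ + F _ + F _); apply: val_inj.
Qed.

Lemma mulmx3 (K : pzSemiRingType) (M : 'M[K]_3) (v : 'cV[K]_3) i :
  (M *m v) i 0 = M i 0 * v 0 0 + M i 1 * v 1 0 + M i 2 * v 2 0.
Proof. by rewrite mxE sum3. Qed.

Lemma cV3P (T : Type) (v w : 'cV[T]_3) :
  v 0 0 = w 0 0 -> v 1 0 = w 1 0 -> v 2 0 = w 2 0 -> v = w.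
Proof. by move=> *; apply/matrixP => i j; rewrite (ord1 j); case: (ord3P i) => ->. Qed.

Definition col3 {K : pzSemiRingType} (a b c : K) : 'cV[K]_3 :=
  \col_(k < 3) nth 0 [:: a; b; c] k.

Lemma continuous_mx_entry (T : topologicalType) m n (i : 'I_m) (j : 'I_n) :
  continuous (fun M : 'M[T]_(m, n) => M i j).
Proof.
move=> M A /= MA; exists (fun i' j' => if (i', j') == (i, j) then A else setT).
  by move=> i' j'; case: eqP => [[-> ->]|_] //; exact: filterT.
by move=> N /(_ i j); rewrite eqxx.
Qed.

Lemma continuous_mx (T U : topologicalType) m n (f : T -> 'M[U]_(m, n)) :
  (forall i j, continuous (fun t => f t i j)) -> continuous f.
Proof.
move=> fc t A /= [P tP sPA].
have : \forall s \near t, forall ij : 'I_m * 'I_n, P ij.1 ij.2 (f s ij.1 ij.2).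
  by apply: filter_forall => -[i j]; exact: fc.
by apply: filterS => s Ps; apply: sPA => i j; exact: (Ps (i, j)).
Qed.

Lemma continuous_mulmxl (R : numFieldType) m n p (A : 'M[R]_(m, n)) :
  continuous (fun M : 'M[R]_(n, p) => A *m M).
Proof.
apply: continuous_mx => i j.
have -> : (fun M : 'M[R]_(n, p) => (A *m M) i j) = \sum_k (fun M : 'M[R]_(n, p) => A i k * M k j).
  by rewrite fct_sumE; apply/funext => M; rewrite mxE.
apply: (@big_ind ('M[R]_(n, p) -> R) (fun f => continuous f)) => [|f g cf cg|k _].
- exact: cst_continuous.
- by move=> M; exact: continuousD (cf M) (cg M).
- by move=> M; apply: continuousM; [exact: cst_continuous|exact: continuous_mx_entry].
Qed.

Section Trigonometry.
Variable R : realType.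

Lemma unit_circle_angle (a b : R) : a ^+ 2 + b ^+ 2 = 1 -> exists t, cos t = a /\ sin t = b.
Proof.
move=> ab1; have a_itv : -1 <= a <= 1 by apply/andP; split; nra.
have cosa : cos (acos a) = a by apply: acosK; rewrite in_itv.
have sina : sin (acos a) = `|b| by rewrite sin_acos // -ab1 addrC addKr sqrtr_sqr.
have [b_ge0|b_lt0] := leP 0 b.
  by exists (acos a); rewrite sina ger0_norm.
by exists (- acos a); rewrite cosN sinN sina ltr0_norm ?opprK.
Qed.

Lemma polar_coord (a b : R) : exists t,
  a = Num.sqrt (a ^+ 2 + b ^+ 2) * cos t /\ b = Num.sqrt (a ^+ 2 + b ^+ 2) * sin t.
Proof.
set r := Num.sqrt _; have r_ge0 : 0 <= r := sqrtr_ge0 _.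
have rr : r ^+ 2 = a ^+ 2 + b ^+ 2 by rewrite sqr_sqrtr // addr_ge0 ?sqr_ge0.
have [r0|r_neq0] := eqVneq r 0.
  exists 0; rewrite r0 !mul0r; move: rr; rewrite r0 expr0n /=; nra.
have [t [ct st]] : exists t, cos t = a / r /\ sin t = b / r.
  by apply: unit_circle_angle; rewrite !expr_div_n -mulrDl -rr divff // expf_neq0.
by exists t; rewrite ct st ![r * _]mulrC !divfK.
Qed.

End Trigonometry.

Section Lorentz.
Variable R : realType.
Implicit Types (g h : 'M[R]_3).

Lemma O12_1 : O12 (1%:M : 'M[R]_3).
Proof. by move=> x y; rewrite !mul1mx. Qed.

Lemma O12_mul g h : O12 g -> O12 h -> O12 (g *m h).
Proof. by move=> Og Oh x y; rewrite -!mulmxA Og Oh. Qed.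

Lemma O12_00 g : O12 g -> 1 <= g 0 0 ^+ 2.
Proof.
move=> /(_ (col3 1 0 0) (col3 1 0 0)); rewrite /lform !mulmx3 !mxE /= => e.
have := sqr_ge0 (g 1 0); have := sqr_ge0 (g 2 0); nra.
Qed.

Lemma G_O12 g : G g -> O12 g.
Proof. exact: connected_component_sub. Qed.

Lemma G_1 : G (1%:M : 'M[R]_3).
Proof. exact/connected_component_refl/O12_1. Qed.

(* The values of [g 0 0] on the connected set [G] form an interval containing
   [1] and avoiding [0], since [g 0 0 ^+ 2 >= 1] on [O12]. *)
Lemma G_00_gt0 g : G g -> 0 < g 0 0.
Proof.
move=> Gg; have itvG : is_interval [set h 0 0 | h in @G R].
  apply/connected_intervalP/connected_continuous_connected.
    exact: component_connected.
  exact/continuous_subspaceT/continuous_mx_entry.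
rewrite ltNge; apply/negP => g00_le0.
have [h Gh h00] : [set h 0 0 | h in @G R] 0.
  apply: (itvG (g 0 0) 1); [by exists g|by exists 1%:M; [exact: G_1|rewrite mxE]|].
  by rewrite g00_le0 ler01.
by have := O12_00 (G_O12 Gh); rewrite h00 expr0n ler10.
Qed.

Lemma G_mul g h : G g -> G h -> G (g *m h).
Proof.
move=> Gg Gh.
have gG : connected [set g *m k | k in @G R].
  apply: connected_continuous_connected; first exact: component_connected.
  exact/continuous_subspaceT/continuous_mulmxl.
have : @G R `|` [set g *m k | k in @G R] `<=` @G R.
  apply: connected_component_max.
  - by left; exact: G_1.
  - move=> k [/G_O12 //|[k' /G_O12 Ok' <-]].
    exact: O12_mul (G_O12 Gg) Ok'.
  apply: connectedU => //; last exact: component_connected.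
  by exists g; split=> //; exists 1%:M; [exact: G_1|rewrite mulmx1].
by apply; right; exists h.
Qed.

Lemma path_in_G (f : R -> 'M[R]_3) :
  continuous f -> f 0 = 1%:M -> (forall t, O12 (f t)) -> forall t, G (f t).
Proof.
move=> cf f0 Of t.
have : range f `<=` @G R.
  apply: connected_component_max; first by exists 0.
  - by move=> _ [s _ <-].
  apply: connected_continuous_connected; last exact: continuous_subspaceT.
  by apply/connected_intervalP => a b _ _ c _.
by apply; exists t.
Qed.

End Lorentz.

Section RotationsBoosts.
Variable R : realType.
Implicit Types (t w : R).

Definition rot t : 'M[R]_3 := \matrix_(i, j) nth 0 (nth [::]
  [:: [:: 1; 0; 0]; [:: 0; cos t; - sin t]; [:: 0; sin t; cos t]] i) j.

Definition boost w : 'M[R]_3 := \matrix_(i, j) nth 0 (nth [::]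
  [:: [:: Num.sqrt (1 + w ^+ 2); w; 0]; [:: w; Num.sqrt (1 + w ^+ 2); 0]; [:: 0; 0; 1]] i) j.

Lemma sqr_boost_diag w : Num.sqrt (1 + w ^+ 2) ^+ 2 = 1 + w ^+ 2.
Proof. by rewrite sqr_sqrtr // addr_ge0 ?sqr_ge0. Qed.

Lemma rot_O12 t : O12 (rot t).
Proof.
move=> x y; rewrite /lform !mulmx3 !mxE /=.
transitivity (x 0 0 * y 0 0 - (cos t ^+ 2 + sin t ^+ 2) * (x 1 0 * y 1 0 + x 2 0 * y 2 0)).
  ring.
by rewrite cos2Dsin2 mul1r opprD addrA.
Qed.

Lemma boost_O12 w : O12 (boost w).
Proof.
move=> x y; rewrite /lform !mulmx3 !mxE /=.
have := sqr_boost_diag w; set c := Num.sqrt _ => cc.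
transitivity ((c ^+ 2 - w ^+ 2) * (x 0 0 * y 0 0 - x 1 0 * y 1 0) - x 2 0 * y 2 0).
  ring.
by rewrite cc addrK mul1r.
Qed.

Lemma rot0 : rot 0 = 1%:M.
Proof.
apply/matrixP => i j; rewrite !mxE cos0 sin0 oppr0.
by case: (ord3P i) => ->; case: (ord3P j) => ->.
Qed.

Lemma boost0 : boost 0 = 1%:M.
Proof.
apply/matrixP => i j; rewrite !mxE expr0n addr0 sqrtr1.
by case: (ord3P i) => ->; case: (ord3P j) => ->.
Qed.

Lemma continuous_rot : continuous rot.
Proof.
apply: continuous_mx => i j; under eq_fun do rewrite mxE.
case: (ord3P i) => ->; case: (ord3P j) => -> /=;
  by [exact: cst_continuous|exact: continuous_cos|exact: continuous_sin
     |move=> t; apply: continuousN; exact: continuous_sin].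
Qed.

Lemma continuous_boost : continuous boost.
Proof.
have cdiag : continuous (fun w : R => Num.sqrt (1 + w ^+ 2)).
  move=> w; apply: continuous_comp; last exact: sqrt_continuous.
  by apply: continuousD; [exact: cst_continuous|exact: continuousM].
apply: continuous_mx => i j; under eq_fun do rewrite mxE.
by case: (ord3P i) => ->; case: (ord3P j) => -> /=; exact: cst_continuous || exact: cdiag || done.
Qed.

Lemma rot_G t : G (rot t).
Proof. exact: path_in_G continuous_rot rot0 rot_O12 t. Qed.

Lemma boost_G w : G (boost w).
Proof. exact: path_in_G continuous_boost boost0 boost_O12 w. Qed.

Lemma rot_mulN t : rot t *m rot (- t) = 1%:M.
Proof.
apply/matrixP => i j; rewrite mxE sum3 !mxE cosN sinN.
have := cos2Dsin2 t; case: (ord3P i) => ->; case: (ord3P j) => -> /=; lra.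
Qed.

Lemma boost_mulN w : boost w *m boost (- w) = 1%:M.
Proof.
apply/matrixP => i j; rewrite mxE sum3 !mxE sqrrN.
have := sqr_boost_diag w; set c := Num.sqrt _ => cc.
by case: (ord3P i) => ->; case: (ord3P j) => -> /=; lra.
Qed.

End RotationsBoosts.

Lemma lformC (K : comNzRingType) (z w : 'cV[K]_3) : lform z w = lform w z.
Proof. by rewrite /lform !(mulrC (z _ _)). Qed.

Section ComplexVectors.
Variable R : realType.
Implicit Types (u : R) (g : 'M[R]_3) (z w : 'cV[R[i]]_3).
Local Notation Re := (@complex.Re R).
Local Notation Im := (@complex.Im R).

Lemma lform_ReIm z w : lform z w =
  (lform (reV z) (reV w) - lform (imV z) (imV w))
    +i* (lform (reV z) (imV w) + lform (imV z) (reV w)).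
Proof.
rewrite /lform /reV /imV !mxE.
case: (z 0 0) (z 1 0) (z 2 0) (w 0 0) (w 1 0) (w 2 0)
  => [a0 b0] [a1 b1] [a2 b2] [c0 d0] [c1 d1] [c2 d2].
by apply/eqP; rewrite eq_complex /=; apply/andP; split; apply/eqP; ring.
Qed.

Lemma XcE z : Xc z <->
  lform (reV z) (reV z) - lform (imV z) (imV z) = -1 /\ lform (reV z) (imV z) = 0.
Proof.
rewrite /Xc /= lform_ReIm (lformC (imV z)).
have -> : -1 = (-1) +i* 0 :> R[i] by rewrite complexr0 rmorphN.
by split=> [[-> e]|[-> ->]]; [split=> //; lra|rewrite addr0].
Qed.

Lemma ReD : {morph Re : a b / a + b}. Proof. by case=> ? ? []. Qed.
Lemma ImD : {morph Im : a b / a + b}. Proof. by case=> ? ? []. Qed.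

Lemma reV_act g z : reV (act g z) = g *m reV z.
Proof.
apply/matrixP => i j; rewrite !mxE (big_morph Re ReD (erefl : Re 0 = 0)).
by apply: eq_bigr => k _; rewrite !mxE; case: (z k j) => a b /=; ring.
Qed.

Lemma imV_act g z : imV (act g z) = g *m imV z.
Proof.
apply/matrixP => i j; rewrite !mxE (big_morph Im ImD (erefl : Im 0 = 0)).
by apply: eq_bigr => k _; rewrite !mxE; case: (z k j) => a b /=; ring.
Qed.

Lemma cV_ReIm_inj z w : reV z = reV w -> imV z = imV w -> z = w.
Proof.
move=> /matrixP re /matrixP im; apply/matrixP => i j.
by move: (re i j) (im i j); rewrite !mxE; case: (z i j) (w i j) => ? ? [? ?] /= -> ->.
Qed.

Lemma lform_act g z w : O12 g -> lform (act g z) (act g w) = lform z w.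
Proof. by move=> Og; rewrite !lform_ReIm !reV_act !imV_act !Og. Qed.

Lemma Xc_act g z : O12 g -> Xc z -> Xc (act g z).
Proof. by move=> Og; rewrite /Xc /= lform_act. Qed.

Lemma reV_gpt u : reV (gpt u) = col3 0 0 (cos u).
Proof. by apply: cV3P; rewrite !mxE. Qed.

Lemma imV_gpt u : imV (gpt u) = col3 (sin u) 0 0.
Proof. by apply: cV3P; rewrite !mxE. Qed.

Lemma Xc_gpt u : Xc (gpt u).
Proof.
apply/XcE; rewrite reV_gpt imV_gpt /lform !mxE /=.
by split; [have := cos2Dsin2 u|]; lra.
Qed.

Definition conjV z : 'cV[R[i]]_3 := map_mx conjc z.

Lemma conjVK : involutive conjV.
Proof. by move=> z; apply/matrixP => i j; rewrite !mxE conjcK. Qed.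

Lemma imV_conjV z : imV (conjV z) = - imV z.
Proof. by apply/matrixP => i j; rewrite !mxE; case: (z i j). Qed.

Lemma Xc_conjV z : Xc (conjV z) <-> Xc z.
Proof.
have lformV : lform (conjV z) (conjV z) = (lform z z)^*.
  by rewrite /lform !mxE !rmorphB !rmorphM.
rewrite /Xc /= lformV; split=> [/(congr1 conjc)|->]; last by rewrite rmorphN rmorph1.
by rewrite conjcK rmorphN rmorph1.
Qed.

Lemma act_conjV g z : act g (conjV z) = conjV (act g z).
Proof.
rewrite /act /conjV map_mxM -map_mx_comp.
by congr (_ *m _); apply/matrixP => i j; rewrite !mxE /= oppr0.
Qed.

Lemma gpt_conjV u : conjV (gpt u) = gpt (- u).
Proof. by apply/matrixP => i j; rewrite !mxE; case: (ord3P i) => -> /=; rewrite ?cosN ?sinN ?oppr0. Qed.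

End ComplexVectors.

Section Tubes.
Variable R : realType.
Implicit Types (t w : R) (y v : 'cV[R]_3).

Lemma rot_col3_e0 t (a : R) : rot t *m col3 a 0 0 = col3 a 0 0.
Proof. by apply: cV3P; rewrite !mulmx3 !mxE /=; ring. Qed.

Lemma Vplus_orbit y : Vplus y ->
  exists t w, y = rot t *m boost w *m col3 (Num.sqrt (lform y y)) 0 0.
Proof.
case=> Q_gt0 y0_gt0; set S := Num.sqrt _.
have S_gt0 : 0 < S by rewrite sqrtr_gt0.
have SS : S ^+ 2 = lform y y by rewrite sqr_sqrtr // ltW.
have [t [y1E y2E]] := polar_coord (y 1 0) (y 2 0).
set r := Num.sqrt _ in y1E y2E.
have rr : r ^+ 2 = y 1 0 ^+ 2 + y 2 0 ^+ 2 by rewrite sqr_sqrtr // addr_ge0 ?sqr_ge0.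
have y0E : Num.sqrt (1 + (r / S) ^+ 2) * S = y 0 0.
  apply/eqP; rewrite -(eqrXn2 (_ : 0 < 2)%N) ?mulr_ge0 ?sqrtr_ge0 ?ltW //.
  rewrite exprMn sqr_boost_diag mulrDl mul1r expr_div_n divfK ?sqrf_eq0 ?(gt_eqF S_gt0) //.
  by rewrite SS rr /lform; apply/eqP; ring.
exists t, (r / S); rewrite -mulmxA.
apply: cV3P; rewrite !mulmx3 !mxE /=.
- by rewrite -y0E; ring.
- by rewrite y1E; field; exact: lt0r_neq0.
- by rewrite y2E; field; exact: lt0r_neq0.
Qed.

Lemma e0_perp_orbit v : v 0 0 = 0 ->
  exists t, v = rot t *m col3 0 0 (Num.sqrt (v 1 0 ^+ 2 + v 2 0 ^+ 2)).
Proof.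
move=> v0; have [t []] := polar_coord (v 2 0) (- v 1 0).
rewrite sqrrN addrC; set c := Num.sqrt _ => v2E v1E.
exists t; apply: cV3P; rewrite mulmx3 !mxE /=.
- by rewrite v0; ring.
- by rewrite -[LHS]opprK v1E; ring.
- by rewrite v2E; ring.
Qed.

Lemma Gorbits_sub_Tplus : Gorbits (@gamma_plus R) `<=` @Tplus R.
Proof.
move=> _ [g [_ [Gg [[u [u_itv ->]] ->]]]]; split; first exact: Xc_act (G_O12 Gg) (Xc_gpt u).
have sinu_gt0 := sin_gt0_pi u_itv.
rewrite imV_act imV_gpt; split.
- by rewrite (G_O12 Gg) /lform !mxE /=; nra.
- by rewrite mulmx3 !mxE /=; have := G_00_gt0 Gg; nra.
Qed.

Lemma Tplus_sub_Gorbits : @Tplus R `<=` Gorbits (@gamma_plus R).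
Proof.
move=> z [/XcE[xx_yy xy] Vy]; set x := reV z in xx_yy xy *; set y := imV z in xx_yy xy Vy *.
have [t1 [w yE]] := Vplus_orbit Vy; have [Q_gt0 _] := Vy.
set S := Num.sqrt _ in yE; set h := rot t1 *m boost w in yE.
have S_gt0 : 0 < S by rewrite sqrtr_gt0.
have Oh : O12 h := O12_mul (rot_O12 t1) (boost_O12 w).
(* [v = h^-1 x] is orthogonal to [h^-1 y = (S, 0, 0)], so only a rotation
   separates it from [(0, 0, cos u)]. *)
pose v := boost (- w) *m rot (- t1) *m x.
have hv : h *m v = x.
  by rewrite /h /v !mulmxA -[rot t1 *m _ *m _]mulmxA boost_mulN mulmx1 rot_mulN mul1mx.
have v0 : v 0 0 = 0.
  have : lform v (col3 S 0 0) = 0 by rewrite -Oh hv -yE.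
  rewrite /lform !mxE /= !mulr0 !subr0 => /eqP.
  by rewrite mulf_eq0 (gt_eqF S_gt0) orbF => /eqP.
have vv : v 1 0 ^+ 2 + v 2 0 ^+ 2 = 1 - lform y y.
  have : lform v v = lform x x by rewrite -Oh hv.
  by rewrite {1}/lform v0; lra.
have [t2] := e0_perp_orbit v0; rewrite vv; set c := Num.sqrt _ => vE.
have c_itv : 0 <= c < 1.
  by rewrite sqrtr_ge0 /= -sqrtr1 ltr_sqrt ?ltrBlDr ?ltrDl // -vv addr_gt0 ?sqr_ge0.
have cos_u : cos (acos c) = c by rewrite acosK // in_itv /=; lra.
have cc : c ^+ 2 = 1 - lform y y by rewrite sqr_sqrtr // -vv addr_ge0 ?sqr_ge0.
have sin_u : sin (acos c) = S.
  by rewrite sin_acos ?cc; [congr Num.sqrt|]; lra.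
exists (h *m rot t2), (gpt (acos c)); split.
  exact: G_mul (G_mul (rot_G t1) (boost_G w)) (rot_G t2).
split.
  by exists (acos c); split=> //; rewrite acos_gt0 ?acos_ltpi //; lra.
apply: cV_ReIm_inj.
- by rewrite reV_act reV_gpt cos_u -mulmxA -vE hv.
- by rewrite imV_act imV_gpt sin_u -mulmxA rot_col3_e0 -yE.
Qed.

Lemma Tminus_conjV : @Tminus R = @conjV R @^-1` @Tplus R.
Proof.
apply/funext => z; apply/propext.
by rewrite /Tminus /Tplus /Vminus /= imV_conjV (propext (Xc_conjV z)).
Qed.

Lemma Gorbits_minus_conjV : Gorbits (@gamma_minus R) = @conjV R @^-1` Gorbits (@gamma_plus R).
Proof.
apply/funext => z; apply/propext; split.
  move=> [g [_ [Gg [[u [u_itv ->]] ->]]]]; exists g, (gpt (- u)).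
  split=> //; split; last by rewrite -act_conjV gpt_conjV.
  by exists (- u); split=> //; rewrite oppr_gt0 ltrNl; lra.
move=> [g [_ [Gg [[u [u_itv ->]] zE]]]]; exists g, (gpt (- u)).
split=> //; split; last by rewrite -[z]conjVK /= zE -act_conjV gpt_conjV.
by exists (- u); split=> //; rewrite ltrNl oppr_lt0; lra.
Qed.

End Tubes.

Theorem proposition2 (R : realType) :
  @Tplus R = @Gorbits R (@gamma_plus R) /\ @Tminus R = @Gorbits R (@gamma_minus R).
Proof.
have Tplus_eq : @Tplus R = Gorbits (@gamma_plus R).
  by apply/seteqP; split; [exact: Tplus_sub_Gorbits|exact: Gorbits_sub_Tplus].
by rewrite Tminus_conjV Gorbits_minus_conjV Tplus_eq.
Qed.
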